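(* There is an absolute constant $c$ such that the following holds. Let $P$ be a finite set of points in $\mathbb{R}^2$, each $p\in P$ having a transmission radius $r(p)>0$. Let $C$ be a clique in the intersection graph $\mathcal{G}^{\times}(\mathcal{D}_P)$ and let $P(C)\subseteq P$ be the set of points whose transmission disks belong to $C$. Then $P(C)$ can be covered by at most $c$ transitive paths in $\mathcal{G}_{\mathrm{tr}}(P)$, i.e. $P(C)$ is the union of at most $c$ sets each of whose points can be ordered as a transitive path.
   Context: The transmission graph $\mathcal{G}_{\mathrm{tr}}(P)$ is the directed graph on $P$ with an arc $(p,q)$ iff $|pq|\leq r(p)$ (Euclidean distance). The transmission disk of $p$ is $D_p$, the closed disk of radius $r(p)$ centered at $p$, and $\mathcal{D}_P=\{D_p:p\in P\}$. $\mathcal{G}^{\times}(\mathcal{D}_P)$ is the undirected graph with node set $\mathcal{D}_P$ and an edge between $D_p,D_q$ iff $D_p\cap D_q\neq\emptyset$. A transitive path is a sequence $q_1,\ldots,q_k$ of distinct points of $P$ such that $(q_i,q_j)$ is an arc of $\mathcal{G}_{\mathrm{tr}}(P)$ for all $1\le i<j\le k$. *)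

From Stdlib Require Import Reals List.
Import ListNotations.
Open Scope R_scope.

Definition point : Type := (R * R)%type.

Definition dist (p q : point) : R :=
  sqrt ((fst p - fst q) ^ 2 + (snd p - snd q) ^ 2).

Definition in_disk (r : point -> R) (p z : point) : Prop := dist z p <= r p.

Definition tr_arc (r : point -> R) (p q : point) : Prop := dist p q <= r p.

Definition disks_intersect (r : point -> R) (p q : point) : Prop :=
  exists z : point, in_disk r p z /\ in_disk r q z.

(* C (given by the centers P(C) of its disks) is a clique of G^x(D_P). *)
Definition is_clique (P : list point) (r : point -> R) (C : list point) : Prop :=
  incl C P /\
  forall p q, In p C -> In q C -> p <> q -> disks_intersect r p q.

Definition transitive_path (P : list point) (r : point -> R) (s : list point) : Prop :=
  NoDup s /\ incl s P /\ ForallOrdPairs (tr_arc r) s.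

From Pilot Require Import Defs.
From Stdlib Require Import Reals List Lra Psatz Lia Permutation.
From Stdlib Require Rgeom.
(* Reals exports its own [dist]; re-import Defs so that its [dist] wins. *)
Import Pilot.Defs.
Import ListNotations.
Open Scope R_scope.

(* Let m be a point of C whose disk has the smallest radius rho.  Every disk
   D_p of C meets D_m and has radius at least rho, so it contains one of the
   25 grid points m + rho (i, j) with -2 <= i, j <= 2.  Group the points p of
   C by such a grid point g inside D_p and by the octant around g in which p
   lies.  Two vectors in a common octant make an angle of at most pi/4, so if
   |g b| <= |g a| then |a b| <= |a g| <= r(a): listing a group by decreasing
   distance from g gives a transitive path, and C is covered by at most
   25 * 8 = 200 of them. *)

Definition sqdist (a b : point) : R := (fst a - fst b) ^ 2 + (snd a - snd b) ^ 2.

Lemma sqdist_nonneg a b : 0 <= sqdist a b.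
Proof.
  unfold sqdist; pose proof (pow2_ge_0 (fst a - fst b)); pose proof (pow2_ge_0 (snd a - snd b)).
  lra.
Qed.

Lemma dist_sym a b : dist a b = dist b a.
Proof. unfold dist; f_equal; ring. Qed.

Lemma dist_triangle a b c : dist a c <= dist a b + dist b c.
Proof.
  assert (Heuc : forall x y, dist x y = Rgeom.dist_euc (fst x) (snd x) (fst y) (snd y)).
  { intros x y; unfold dist, Rgeom.dist_euc, Rsqr; f_equal; ring. }
  rewrite !Heuc; apply Rgeom.triangle.
Qed.

Lemma dist_le_sqdist a b rad : 0 <= rad -> dist a b <= rad <-> sqdist a b <= rad ^ 2.
Proof.
  intros Hrad; unfold dist; rewrite <- (sqrt_pow2 rad Hrad) at 1.
  split; [apply sqrt_le_0; [apply sqdist_nonneg | nra] | apply sqrt_le_1_alt].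
Qed.

Lemma dist_le_of_sqdist_le a b c d : sqdist a b <= sqdist c d -> dist a b <= dist c d.
Proof. apply sqrt_le_1_alt. Qed.

Lemma disks_intersect_refl r p : 0 <= r p -> disks_intersect r p p.
Proof.
  exists p; unfold in_disk, dist.
  replace ((fst p - fst p) ^ 2 + (snd p - snd p) ^ 2) with 0 by ring.
  rewrite sqrt_0; lra.
Qed.

Lemma half_quadrant_sub_sqr_le a b c d :
  0 <= b <= a -> 0 <= d <= c -> c ^ 2 + d ^ 2 <= a ^ 2 + b ^ 2 ->
  (a - c) ^ 2 + (b - d) ^ 2 <= a ^ 2 + b ^ 2.
Proof.
  intros [Hb Hab] [Hd Hcd] Hn.
  (* the angle between (a, b) and (c, d) is at most pi/4 *)
  assert (Hcos : (a ^ 2 + b ^ 2) * (c ^ 2 + d ^ 2) <= 2 * (a * c + b * d) ^ 2).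
  { assert (0 <= (a ^ 2 - b ^ 2) * (c ^ 2 - d ^ 2)) by (apply Rmult_le_pos; nra).
    assert (0 <= a * b * (c * d)) by (apply Rmult_le_pos; apply Rmult_le_pos; lra).
    nra. }
  assert (Hdot : c ^ 2 + d ^ 2 <= 2 * (a * c + b * d)).
  { apply Rsqr_incr_0_var; [unfold Rsqr | nra].
    assert (0 <= c ^ 2 + d ^ 2) by nra.
    nra. }
  nra.
Qed.

Definition octant (v : point) : nat :=
  ((if Rle_dec 0 (fst v) then 0 else 1)
   + 2 * (if Rle_dec 0 (snd v) then 0 else 1)
   + 4 * (if Rle_dec (Rabs (snd v)) (Rabs (fst v)) then 0 else 1))%nat.

Lemma octant_lt_8 v : (octant v < 8)%nat.
Proof. unfold octant; repeat destruct Rle_dec; lia. Qed.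

Lemma octant_eq_signs u v : octant u = octant v ->
  (0 <= fst u <-> 0 <= fst v) /\ (0 <= snd u <-> 0 <= snd v) /\
  (Rabs (snd u) <= Rabs (fst u) <-> Rabs (snd v) <= Rabs (fst v)).
Proof.
  unfold octant; repeat destruct Rle_dec; intro; try lia;
  repeat split; intro; first [assumption | contradiction].
Qed.

Lemma sqr_sub_same_sign x y : (0 <= x <-> 0 <= y) -> (x - y) ^ 2 = (Rabs x - Rabs y) ^ 2.
Proof.
  intros Hxy; destruct (Rle_dec 0 x) as [Hx | Hx].
  - rewrite (Rabs_pos_eq x), (Rabs_pos_eq y) by (try apply Hxy; lra); reflexivity.
  - assert (~ 0 <= y) by tauto.
    rewrite (Rabs_left x), (Rabs_left y) by lra; ring.
Qed.

Lemma same_octant_sub_sqr_le u1 u2 v1 v2 :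
  octant (u1, u2) = octant (v1, v2) -> v1 ^ 2 + v2 ^ 2 <= u1 ^ 2 + u2 ^ 2 ->
  (u1 - v1) ^ 2 + (u2 - v2) ^ 2 <= u1 ^ 2 + u2 ^ 2.
Proof.
  intros Hoct Hle; destruct (octant_eq_signs _ _ Hoct) as [Hx [Hy Hshape]]; cbn [fst snd] in *.
  rewrite (sqr_sub_same_sign _ _ Hx), (sqr_sub_same_sign _ _ Hy).
  rewrite <- (pow2_abs u1), <- (pow2_abs u2), <- (pow2_abs v1), <- (pow2_abs v2) in *.
  pose proof (Rabs_pos u1); pose proof (Rabs_pos u2).
  pose proof (Rabs_pos v1); pose proof (Rabs_pos v2).
  destruct (Rle_dec (Rabs u2) (Rabs u1)) as [Hu | Hu].
  - apply half_quadrant_sub_sqr_le; [lra | split; [lra | tauto] | lra].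
  - assert (~ Rabs v2 <= Rabs v1) by tauto.
    rewrite (Rplus_comm ((Rabs u1 - _) ^ 2)), (Rplus_comm (Rabs u1 ^ 2)).
    apply half_quadrant_sub_sqr_le; lra.
Qed.

Definition vsub (a b : point) : point := (fst a - fst b, snd a - snd b).

Definition in_class (r : point -> R) (g : point) (k : nat) (p : point) : bool :=
  if Rle_dec (dist g p) (r p) then Nat.eqb (octant (vsub p g)) k else false.

Lemma tr_arc_in_class r g k a b :
  in_class r g k a = true -> in_class r g k b = true ->
  sqdist b g <= sqdist a g -> tr_arc r a b.
Proof.
  unfold in_class, tr_arc.
  destruct (Rle_dec (dist g a) (r a)) as [Hga |]; [| discriminate].
  destruct (Rle_dec (dist g b) (r b)); [| discriminate].
  intros Hka%Nat.eqb_eq Hkb%Nat.eqb_eq Hba.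
  assert (Hab : sqdist a b <= sqdist a g).
  { unfold sqdist.
    replace (fst a - fst b) with (fst a - fst g - (fst b - fst g)) by ring.
    replace (snd a - snd b) with (snd a - snd g - (snd b - snd g)) by ring.
    apply same_octant_sub_sqr_le; [unfold vsub in *; congruence | exact Hba]. }
  apply dist_le_of_sqdist_le in Hab; rewrite dist_sym in Hga; lra.
Qed.

Definition grid_steps : list R := [-2; -1; 0; 1; 2].

Definition grid_point (o : point) (rho : R) (st : R * R) : point :=
  (fst o + fst st * rho, snd o + snd st * rho).

Lemma round_to_grid_step rho t : 0 < rho -> t ^ 2 <= (2 * rho) ^ 2 ->
  exists s, In s grid_steps /\ (t - s * rho) ^ 2 <= (rho / 2) ^ 2.
Proof.
  intros Hrho Ht.
  assert (-2 * rho <= t <= 2 * rho) by nra.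
  destruct (Rle_dec t (-3/2 * rho)); [exists (-2); split; [simpl; tauto | nra] |].
  destruct (Rle_dec t (-1/2 * rho)); [exists (-1); split; [simpl; tauto | nra] |].
  destruct (Rle_dec t (1/2 * rho)); [exists 0; split; [simpl; tauto | nra] |].
  destruct (Rle_dec t (3/2 * rho)); [exists 1; split; [simpl; tauto | nra] |].
  exists 2; split; [simpl; tauto | nra].
Qed.

Lemma exists_inner_center p z rad rho :
  0 < rho <= rad -> dist z p <= rad ->
  exists c, dist c p <= rad - rho /\ dist c z <= rho.
Proof.
  intros Hrho Hz; set (t := rho / rad).
  assert (Htr : t * rad = rho) by (unfold t; field; lra).
  assert (Ht : 0 < t <= 1) by (split; nra).
  apply dist_le_sqdist in Hz; [| lra]; unfold sqdist in Hz.
  exists (fst z + t * (fst p - fst z), snd z + t * (snd p - snd z)).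
  split; apply dist_le_sqdist; try lra; unfold sqdist; cbn [fst snd].
  - replace (rad - rho) with ((1 - t) * rad) by (rewrite <- Htr; ring).
    replace (_ ^ 2 + _ ^ 2)
      with ((1 - t) ^ 2 * ((fst z - fst p) ^ 2 + (snd z - snd p) ^ 2)) by ring.
    rewrite Rpow_mult_distr; apply Rmult_le_compat_l; nra.
  - rewrite <- Htr.
    replace (_ ^ 2 + _ ^ 2)
      with (t ^ 2 * ((fst z - fst p) ^ 2 + (snd z - snd p) ^ 2)) by ring.
    rewrite Rpow_mult_distr; apply Rmult_le_compat_l; nra.
Qed.

Lemma grid_point_in_disk r o p :
  0 < r o <= r p -> disks_intersect r p o ->
  exists st, In st (list_prod grid_steps grid_steps) /\ in_disk r p (grid_point o (r o) st).
Proof.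
  intros Hr [z [Hzp Hzo]]; unfold in_disk in *.
  destruct (exists_inner_center p z (r p) (r o) Hr Hzp) as [c [Hcp Hcz]].
  assert (Hco : sqdist c o <= (2 * r o) ^ 2).
  { apply dist_le_sqdist; [lra |]; pose proof (dist_triangle c z o); lra. }
  unfold sqdist in Hco.
  pose proof (pow2_ge_0 (fst c - fst o)); pose proof (pow2_ge_0 (snd c - snd o)).
  destruct (round_to_grid_step (r o) (fst c - fst o)) as [s [Hs Hsc]]; [lra | lra |].
  destruct (round_to_grid_step (r o) (snd c - snd o)) as [t [Ht Htc]]; [lra | lra |].
  exists (s, t); split; [apply in_prod; assumption |].
  assert (Hgc : dist (grid_point o (r o) (s, t)) c <= r o).
  { apply dist_le_sqdist; [lra |]; unfold sqdist, grid_point; cbn [fst snd].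
    replace (_ ^ 2 + _ ^ 2)
      with ((fst c - fst o - s * r o) ^ 2 + (snd c - snd o - t * r o) ^ 2) by ring.
    nra. }
  pose proof (dist_triangle (grid_point o (r o) (s, t)) c p); lra.
Qed.

Section DescendingSort.

Context {A : Type} (f : A -> R).

Fixpoint insert_desc (x : A) (l : list A) : list A :=
  match l with
  | [] => [x]
  | y :: t => if Rle_dec (f x) (f y) then y :: insert_desc x t else x :: y :: t
  end.

Fixpoint sort_desc (l : list A) : list A :=
  match l with [] => [] | x :: t => insert_desc x (sort_desc t) end.

Lemma insert_desc_perm x l : Permutation (x :: l) (insert_desc x l).
Proof.
  induction l as [| y l IH]; simpl; [reflexivity |].
  destruct Rle_dec; [| reflexivity].
  rewrite perm_swap; apply perm_skip, IH.
Qed.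

Lemma sort_desc_perm l : Permutation l (sort_desc l).
Proof.
  induction l as [| x l IH]; simpl; [reflexivity |].
  rewrite <- insert_desc_perm; apply perm_skip, IH.
Qed.

Lemma insert_desc_sorted x l :
  ForallOrdPairs (fun a b => f b <= f a) l ->
  ForallOrdPairs (fun a b => f b <= f a) (insert_desc x l).
Proof.
  induction 1 as [| y l Hy Hl IH]; simpl; [repeat constructor |].
  destruct Rle_dec as [Hxy | Hxy].
  - constructor; [| exact IH].
    apply Forall_forall; intros b Hb.
    apply (Permutation_in _ (Permutation_sym (insert_desc_perm x l))) in Hb.
    destruct Hb as [<- | Hb]; [exact Hxy | exact (proj1 (Forall_forall _ _) Hy b Hb)].
  - constructor; [| constructor; assumption].
    constructor; [lra |].
    eapply Forall_impl; [| exact Hy]; simpl; intros; lra.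
Qed.

Lemma sort_desc_sorted l : ForallOrdPairs (fun a b => f b <= f a) (sort_desc l).
Proof. induction l; simpl; [constructor | apply insert_desc_sorted; assumption]. Qed.

End DescendingSort.

Lemma ForallOrdPairs_impl_in {A : Type} (R1 R2 : A -> A -> Prop) l :
  (forall a b, In a l -> In b l -> R1 a b -> R2 a b) ->
  ForallOrdPairs R1 l -> ForallOrdPairs R2 l.
Proof.
  intros Himpl Hl; induction Hl as [| a l Ha Hl IH]; constructor.
  - rewrite Forall_forall in *; intros b Hb; apply Himpl; simpl; auto.
  - apply IH; intros; apply Himpl; simpl; auto.
Qed.

Lemma exists_argmin {A : Type} (f : A -> R) (l : list A) (x0 : A) :
  exists m, forall p, In p l -> In m l /\ f m <= f p.
Proof.
  induction l as [| x l [m Hm]]; [exists x0; intros _ [] |].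
  destruct l as [| y l].
  - exists x; intros p [<- | []]; simpl; split; [left |]; auto; lra.
  - destruct (Hm y (or_introl eq_refl)) as [Hml _].
    destruct (Rle_dec (f x) (f m)).
    + exists x; intros p [<- | Hp]; split; simpl; auto; [lra |].
      specialize (Hm p Hp); lra.
    + exists m; intros p [<- | Hp]; split; simpl; auto; [lra |].
      apply Hm, Hp.
Qed.

Definition point_eq_dec (a b : point) : {a = b} + {a <> b}.
Proof. decide equality; apply Req_EM_T. Defined.

Definition labels : list (R * R * nat) :=
  list_prod (list_prod grid_steps grid_steps) (seq 0 8).

Definition class_path (r : point -> R) (m : point) (C : list point) (L : R * R * nat) :=
  let g := grid_point m (r m) (fst L) in
  sort_desc (fun q => sqdist q g) (filter (in_class r g (snd L)) (nodup point_eq_dec C)).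

Lemma in_class_path r m C L p :
  In p (class_path r m C L) <-> In p C /\ in_class r (grid_point m (r m) (fst L)) (snd L) p = true.
Proof.
  unfold class_path; split.
  - intros Hp%(Permutation_in _ (Permutation_sym (sort_desc_perm _ _))).
    apply filter_In in Hp as [Hp Hk]; split; [eapply nodup_In |]; eassumption.
  - intros [Hp Hk]; apply (Permutation_in _ (sort_desc_perm _ _)), filter_In.
    split; [apply nodup_In |]; assumption.
Qed.

Lemma class_path_transitive P r m C L :
  incl C P -> transitive_path P r (class_path r m C L).
Proof.
  intros HCP; split; [| split].
  - eapply Permutation_NoDup; [apply sort_desc_perm |].
    apply NoDup_filter, NoDup_nodup.
  - intros p Hp; apply HCP, (in_class_path r m C L p), Hp.
  - eapply ForallOrdPairs_impl_in; [| apply sort_desc_sorted].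
    intros a b Ha%in_class_path Hb%in_class_path Hab.
    eapply tr_arc_in_class; [apply Ha | apply Hb | exact Hab].
Qed.

Lemma clique_in_class_paths P r C m p :
  (forall q, In q P -> 0 < r q) -> is_clique P r C ->
  In m C -> (forall q, In q C -> r m <= r q) -> In p C ->
  exists L, In L labels /\ In p (class_path r m C L).
Proof.
  intros Hr [HCP Hcl] Hm Hmin Hp.
  assert (Hrm : 0 < r m) by apply Hr, HCP, Hm.
  assert (Hpm : disks_intersect r p m).
  { destruct (point_eq_dec p m) as [-> | Hne]; [apply disks_intersect_refl; lra |].
    apply Hcl; assumption. }
  destruct (grid_point_in_disk r m p (conj Hrm (Hmin p Hp)) Hpm) as [st [Hst Hg]].
  set (g := grid_point m (r m) st).
  exists (st, octant (vsub p g)); split.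
  - apply in_prod; [exact Hst |]; apply in_seq; pose proof (octant_lt_8 (vsub p g)); lia.
  - apply in_class_path; split; [exact Hp |]; simpl; fold g.
    unfold in_class; destruct Rle_dec; [apply Nat.eqb_refl | contradiction].
Qed.

Theorem lemma3 :
  exists c : nat,
    forall (P : list point) (r : point -> R),
      NoDup P ->
      (forall p, In p P -> 0 < r p) ->
      forall C : list point,
        is_clique P r C ->
        exists paths : list (list point),
          (length paths <= c)%nat /\
          (forall s, In s paths -> transitive_path P r s) /\
          (forall p, In p C <-> exists s, In s paths /\ In p s).
Proof.
  exists 200%nat; intros P r _ Hr C HC.
  destruct (exists_argmin r C (0, 0)) as [m Hm].
  exists (map (class_path r m C) labels); split; [| split].
  - rewrite length_map; reflexivity.
  - intros s [L [<- _]]%in_map_iff; apply class_path_transitive, HC.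
  - intros p; split.
    + intros Hp; destruct (Hm p Hp) as [HmC _].
      destruct (clique_in_class_paths P r C m p Hr HC HmC (fun q Hq => proj2 (Hm q Hq)) Hp)
        as [L [HL HpL]].
      exists (class_path r m C L); split; [apply in_map |]; assumption.
    + intros [s [[L [<- _]]%in_map_iff Hps]]; apply in_class_path in Hps; apply Hps.
Qed.
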